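(* Let $L>0$, $\delta_t>0$, integer $n\ge1$, and $p=\frac1n$. The cubic equation in $\alpha$ $$\Big(1-\frac{p(\alpha+\delta_t)}{\alpha+L+\delta_t}\Big)\Big(1+\frac{\delta_t}{\alpha}\Big)^2=1$$ has a unique positive root $\alpha$. With this $\alpha$, set $\tau_x=\frac{\alpha+\delta_t}{\alpha+L+\delta_t}$, $\tau_z=\frac{\tau_x}{\delta_t}-\frac{\alpha(1-\tau_x)}{\delta_tL}$, $C_{\rm IDC}=L^2+\frac{L\alpha^2p}{L+(1-p)(\alpha+\delta_t)}$ and $C_{\rm IFC}=2L+\frac{2L\alpha^2p}{(L+(1-p)(\alpha+\delta_t))\delta_t}$. Then $\frac{\alpha}{\delta_t}=O\big(n+\sqrt{n(L/\delta_t+1)}\big)$, $C_{\rm IDC}=O((L+\delta_t)^2)$ and $C_{\rm IFC}=O(L)$.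
   Context: These are the parameters used in the inner loop of the adaptively regularized accelerated SVRG method (R-Acc-SVRG-G) for regularization parameter $\delta_t$. The $O(\cdot)$ hides absolute constants. *)

From Stdlib Require Import Reals.
Open Scope R_scope.

Definition pn (n : nat) : R := / INR n.

Definition alpha_eq (L delta : R) (n : nat) (alpha : R) : Prop :=
  (1 - pn n * (alpha + delta) / (alpha + L + delta)) * (1 + delta / alpha) ^ 2 = 1.

Definition tau_x (L delta alpha : R) : R := (alpha + delta) / (alpha + L + delta).

Definition tau_z (L delta alpha : R) : R :=
  tau_x L delta alpha / delta - alpha * (1 - tau_x L delta alpha) / (delta * L).

Definition C_IDC (L delta : R) (n : nat) (alpha : R) : R :=
  L ^ 2 + L * alpha ^ 2 * pn n / (L + (1 - pn n) * (alpha + delta)).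

Definition C_IFC (L delta : R) (n : nat) (alpha : R) : R :=
  2 * L + 2 * L * alpha ^ 2 * pn n / ((L + (1 - pn n) * (alpha + delta)) * delta).

From Stdlib Require Import Reals Lra Psatz.
Open Scope R_scope.

(* Write N = 1/p and X(a) = N (L + (1 - p)(a + d)).  Clearing denominators,
   the equation becomes (a + d) a^2 = d (2a + d) X(a), i.e.
   ((1 + d/a)^2 - 1) X(a)/(a + d) = 1, whose left-hand side is a product of two
   positive decreasing functions of a; this gives uniqueness.  Wherever the
   cubic is nonpositive, a^2 (a + d) <= d (2a + d) X(a) <= 2 d (a + d) X(a), so
   a^2 <= 2 d X(a); hence the cubic, negative at 0, is positive beyond the
   resulting bound on a, and the intermediate value theorem gives a root.  The
   same inequality gives the three bounds at the root: it is a quadratic inequality in a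
   (whence the square root), and a^2 p / (L + (1 - p)(a + d)) = a^2 / X(a) is
   the term occurring in both C_IDC and C_IFC. *)

Definition scaled_denom (L d N a : R) : R := (N - 1) * (a + d) + N * L.

Definition alpha_cubic (L d N a : R) : R :=
  (a + d) * a ^ 2 - d * (2 * a + d) * scaled_denom L d N a.

Definition alpha_ratio (L d N a : R) : R :=
  ((1 + d / a) ^ 2 - 1) * (N - 1 + N * L / (a + d)).

Lemma quadratic_le_bound (u b c : R) :
  0 <= b -> 0 <= c -> u ^ 2 <= 2 * b * u + 2 * c ^ 2 -> u <= 2 * b + 2 * c.
Proof.
  intros Hb Hc Hu.
  destruct (Rle_or_lt u (2 * b + 2 * c)) as [H | H]; [exact H | nra].
Qed.

Lemma Rdiv_le_of_le_mul (u v w : R) : 0 < w -> u <= v * w -> u / w <= v.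
Proof.
  intros Hw H. apply Rmult_le_reg_r with w; [exact Hw |].
  unfold Rdiv. rewrite Rmult_assoc, Rinv_l, Rmult_1_r by lra. exact H.
Qed.

Section AlphaCubic.

Variables L d N : R.
Hypothesis HL : 0 < L.
Hypothesis Hd : 0 < d.
Hypothesis HN : 1 <= N.

Lemma scaled_denom_pos (a : R) : 0 <= a -> 0 < scaled_denom L d N a.
Proof. intros Ha. unfold scaled_denom. nra. Qed.

Lemma alpha_cubic_continuous : continuity (alpha_cubic L d N).
Proof. unfold alpha_cubic, scaled_denom. reg. Qed.

Lemma alpha_cubic_eq_ratio (a : R) : 0 < a ->
  alpha_cubic L d N a = (a + d) * a ^ 2 * (1 - alpha_ratio L d N a).
Proof. intros Ha. unfold alpha_cubic, alpha_ratio, scaled_denom. field. lra. Qed.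

Lemma alpha_ratio_decreasing (a b : R) : 0 < a -> a < b ->
  alpha_ratio L d N b < alpha_ratio L d N a.
Proof.
  intros Ha Hab. unfold alpha_ratio.
  assert (Hdb : 0 < d / b) by (apply Rdiv_lt_0_compat; lra).
  assert (Hdab : d / b < d / a).
  { apply Rmult_lt_compat_l; [lra | apply Rinv_lt_contravar; nra]. }
  assert (HLab : N * L / (b + d) <= N * L / (a + d)).
  { apply Rmult_le_compat_l; [nra | apply Rinv_le_contravar; lra]. }
  assert (HLb : 0 < N * L / (b + d)) by (apply Rdiv_lt_0_compat; nra).
  set (u := d / a) in *. set (v := d / b) in *.
  assert (Huv : 0 < (1 + v) ^ 2 - 1 < (1 + u) ^ 2 - 1) by (split; nra).
  apply Rle_lt_trans with (((1 + v) ^ 2 - 1) * (N - 1 + N * L / (a + d))).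
  - apply Rmult_le_compat_l; lra.
  - apply Rmult_lt_compat_r; lra.
Qed.

Lemma alpha_cubic_pos_root_unique (a b : R) : 0 < a -> 0 < b ->
  alpha_cubic L d N a = 0 -> alpha_cubic L d N b = 0 -> a = b.
Proof.
  intros Ha Hb Ga Gb.
  assert (ratio_one : forall x, 0 < x -> alpha_cubic L d N x = 0 ->
            alpha_ratio L d N x = 1).
  { intros x Hx Gx. rewrite alpha_cubic_eq_ratio in Gx by exact Hx.
    assert (0 < (x + d) * x ^ 2) by (apply Rmult_lt_0_compat; nra).
    destruct (Rmult_integral _ _ Gx); lra. }
  pose proof (ratio_one a Ha Ga) as Ra. pose proof (ratio_one b Hb Gb) as Rb.
  destruct (Rtotal_order a b) as [Hab | [Hab | Hab]]; [| exact Hab |].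
  - pose proof (alpha_ratio_decreasing a b Ha Hab). lra.
  - pose proof (alpha_ratio_decreasing b a Hb Hab). lra.
Qed.

Lemma sq_le_of_alpha_cubic_nonpos (a : R) : 0 < a -> alpha_cubic L d N a <= 0 ->
  a ^ 2 <= 2 * d * scaled_denom L d N a.
Proof.
  intros Ha Ga. unfold alpha_cubic in Ga.
  pose proof (scaled_denom_pos a (Rlt_le _ _ Ha)) as HX.
  apply Rmult_le_reg_r with (a + d); [lra | nra].
Qed.

Lemma le_of_alpha_cubic_nonpos (a : R) : 0 < a -> alpha_cubic L d N a <= 0 ->
  a <= d * (2 * N + 2 * sqrt (N * (L / d + 1))).
Proof.
  intros Ha Ga.
  pose proof (sq_le_of_alpha_cubic_nonpos a Ha Ga) as Ha2. unfold scaled_denom in Ha2.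
  set (s := sqrt (N * (L / d + 1))).
  assert (Hs : s ^ 2 = N * (L / d + 1)).
  { apply pow2_sqrt. assert (0 < L / d) by (apply Rdiv_lt_0_compat; lra). nra. }
  assert (Hds : (d * s) ^ 2 = N * d * (d + L)).
  { rewrite Rpow_mult_distr, Hs. field. lra. }
  replace (d * (2 * N + 2 * s)) with (2 * (N * d) + 2 * (d * s)) by ring.
  apply quadratic_le_bound.
  - nra.
  - apply Rmult_le_pos; [lra | apply sqrt_pos].
  - rewrite Hds. nra.
Qed.

Lemma alpha_cubic_pos_root_exists : exists a, 0 < a /\ alpha_cubic L d N a = 0.
Proof.
  set (M := d * (2 * N + 2 * sqrt (N * (L / d + 1))) + 1).
  assert (HM : 0 < M).
  { pose proof (sqrt_pos (N * (L / d + 1))). unfold M. nra. }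
  assert (G0 : alpha_cubic L d N 0 < 0).
  { pose proof (scaled_denom_pos 0 (Rle_refl 0)) as HX. unfold alpha_cubic.
    assert (0 < d * (2 * 0 + d) * scaled_denom L d N 0)
      by (apply Rmult_lt_0_compat; [nra | exact HX]).
    nra. }
  assert (GM : 0 < alpha_cubic L d N M).
  { apply Rnot_le_lt. intros GM.
    pose proof (le_of_alpha_cubic_nonpos M HM GM). unfold M in *. lra. }
  destruct (IVT _ 0 M alpha_cubic_continuous HM G0 GM) as [a [[Ha0 _] Ga]].
  exists a. split; [| exact Ga].
  destruct Ha0 as [Ha0 | Ha0]; [exact Ha0 |]. subst a. lra.
Qed.

End AlphaCubic.

Section AlphaEquation.

Variables L d : R.
Variable n : nat.
Hypothesis HL : 0 < L.
Hypothesis Hd : 0 < d.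
Hypothesis Hn : (1 <= n)%nat.

Let HN : 1 <= INR n := le_INR 1 n Hn.

Lemma alpha_eq_iff_cubic_root (a : R) : 0 < a ->
  alpha_eq L d n a <-> alpha_cubic L d (INR n) a = 0.
Proof.
  intros Ha. unfold alpha_eq, pn.
  assert (Hden : 0 < INR n * (a + L + d) * a ^ 2).
  { apply Rmult_lt_0_compat; [apply Rmult_lt_0_compat | apply pow_lt]; lra. }
  replace ((1 - / INR n * (a + d) / (a + L + d)) * (1 + d / a) ^ 2)
    with (1 - alpha_cubic L d (INR n) a / (INR n * (a + L + d) * a ^ 2))
    by (unfold alpha_cubic, scaled_denom; field; lra).
  split; intros H.
  - apply (Rmult_eq_reg_r (/ (INR n * (a + L + d) * a ^ 2))).
    + unfold Rdiv in H. lra.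
    + apply Rinv_neq_0_compat. lra.
  - rewrite H. unfold Rdiv. ring.
Qed.

Lemma pn_term_le_of_alpha_eq (a : R) : 0 < a -> alpha_eq L d n a ->
  a ^ 2 * pn n / (L + (1 - pn n) * (a + d)) <= 2 * d.
Proof.
  intros Ha E. apply alpha_eq_iff_cubic_root in E; [| exact Ha].
  pose proof (scaled_denom_pos L d (INR n) HL Hd HN a (Rlt_le _ _ Ha)) as HX.
  replace (a ^ 2 * pn n / (L + (1 - pn n) * (a + d)))
    with (a ^ 2 / scaled_denom L d (INR n) a)
    by (unfold pn, scaled_denom in *; field; lra).
  apply Rdiv_le_of_le_mul; [exact HX |].
  apply sq_le_of_alpha_cubic_nonpos; auto; lra.
Qed.

Lemma alpha_div_le_of_alpha_eq (a : R) : 0 < a -> alpha_eq L d n a ->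
  a / d <= 2 * INR n + 2 * sqrt (INR n * (L / d + 1)).
Proof.
  intros Ha E. apply alpha_eq_iff_cubic_root in E; [| exact Ha].
  apply Rdiv_le_of_le_mul; [exact Hd |].
  rewrite Rmult_comm. apply le_of_alpha_cubic_nonpos; auto; lra.
Qed.

Lemma C_IDC_le_of_alpha_eq (a : R) : 0 < a -> alpha_eq L d n a ->
  C_IDC L d n a <= (L + d) ^ 2.
Proof.
  intros Ha E. pose proof (pn_term_le_of_alpha_eq a Ha E) as T.
  unfold C_IDC.
  replace (L * a ^ 2 * pn n / (L + (1 - pn n) * (a + d)))
    with (L * (a ^ 2 * pn n / (L + (1 - pn n) * (a + d)))) by (unfold Rdiv; ring).
  nra.
Qed.

Lemma C_IFC_le_of_alpha_eq (a : R) : 0 < a -> alpha_eq L d n a ->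
  C_IFC L d n a <= 6 * L.
Proof.
  intros Ha E. pose proof (pn_term_le_of_alpha_eq a Ha E) as T.
  assert (HD : 0 < L + (1 - pn n) * (a + d)).
  { assert (pn n <= 1) by (unfold pn; rewrite <- Rinv_1; apply Rinv_le_contravar; lra).
    nra. }
  unfold C_IFC.
  replace (2 * L * a ^ 2 * pn n / ((L + (1 - pn n) * (a + d)) * d))
    with (2 * L / d * (a ^ 2 * pn n / (L + (1 - pn n) * (a + d))))
    by (field; lra).
  assert (2 * L / d * (a ^ 2 * pn n / (L + (1 - pn n) * (a + d))) <= 2 * L / d * (2 * d)).
  { apply Rmult_le_compat_l; [apply Rlt_le, Rdiv_lt_0_compat | exact T]; lra. }
  replace (2 * L / d * (2 * d)) with (4 * L) in H by (field; lra).
  lra.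
Qed.

End AlphaEquation.

Theorem proposition3 :
  (forall (L delta : R) (n : nat), 0 < L -> 0 < delta -> (1 <= n)%nat ->
     exists! alpha : R, 0 < alpha /\ alpha_eq L delta n alpha)
  /\
  (exists C : R, 0 < C /\
     forall (L delta : R) (n : nat) (alpha : R),
       0 < L -> 0 < delta -> (1 <= n)%nat ->
       0 < alpha -> alpha_eq L delta n alpha ->
       alpha / delta <= C * (INR n + sqrt (INR n * (L / delta + 1))) /\
       C_IDC L delta n alpha <= C * (L + delta) ^ 2 /\
       C_IFC L delta n alpha <= C * L).
Proof.
  split.
  - intros L d n HL Hd Hn.
    pose proof (le_INR 1 n Hn) as HN.
    destruct (alpha_cubic_pos_root_exists L d (INR n) HL Hd HN) as [a [Ha Ga]].
    exists a. split.
    + split; [exact Ha |]. apply alpha_eq_iff_cubic_root; assumption.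
    + intros b [Hb Eb]. apply alpha_eq_iff_cubic_root in Eb; try assumption.
      exact (alpha_cubic_pos_root_unique L d (INR n) HL Hd HN a b Ha Hb Ga Eb).
  - exists 6. split; [lra |].
    intros L d n a HL Hd Hn Ha E.
    pose proof (pos_INR n). pose proof (sqrt_pos (INR n * (L / d + 1))).
    pose proof (pow2_ge_0 (L + d)).
    pose proof (alpha_div_le_of_alpha_eq L d n HL Hd Hn a Ha E).
    pose proof (C_IDC_le_of_alpha_eq L d n HL Hd Hn a Ha E).
    pose proof (C_IFC_le_of_alpha_eq L d n HL Hd Hn a Ha E).
    split; [| split]; lra.
Qed.
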